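(* Consider the problem and algorithm AC2CD described in the context, let $\{x^k\}$ be a sequence produced by AC2CD, and assume $\lim_{k\to\infty}x^k=x^*$, where $x^*$ is a stationary point with multiplier $\lambda^*$ and $\mathcal A^+(x^* )\neq\emptyset$. Let $\zeta(x^* )=\min_{i\in\mathcal A^+(x^* )}|\nabla_i f(x^* )-\lambda^*|>0$. Let $k_A$ be the first outer iteration such that \[ \|z^{k,i}-x^*\|<\frac{\zeta(x^* )}{2L+\max\bigl\{\frac1{A_l},\frac{L^{\max}}{2(1-\gamma)}\bigr\}},\quad i=1,\dots,n,\quad\text{for all }k\ge k_A. \] Let $k_j$ be the first outer iteration such that $j(k)\notin\mathcal A(x^* )$ for all $k\ge k_j$, let $k_z$ be the first outer iteration such that $l_{j(k)}<z^{k,i}_{j(k)}<u_{j(k)}$ for $i=1,\dots,n+1$ and all $k\ge k_z$, and assume $k_A\ge\max\{k_j,k_z\}$. Then for all $k>k_A$, \[ x^k_h=x^*_h\quad\text{for all } h\in\mathcal A^+(x^* ). \]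
   Context: Problem: minimize $f(x)$ subject to $e^T x = b$ and $l_i \le x_i \le u_i$ ($i=1,\dots,n$), where $n\ge 2$, $e$ is the all-ones vector, $b\in\mathbb{R}$, $l_i\in\mathbb{R}\cup\{-\infty\}$, $u_i\in\mathbb{R}\cup\{+\infty\}$, $l_i<u_i$, and $f:\mathbb{R}^n\to\mathbb{R}$ is continuously differentiable with $\nabla f$ Lipschitz continuous on $\mathbb{R}^n$ with constant $L$. $\mathcal F$ is the feasible set, $e_i$ the $i$th unit vector. For $i\ne j$, $L_{i,j}>0$ are fixed constants such that for every $x\in\mathbb{R}^n$ and $s,t\in\mathbb{R}$, $|\nabla f(x+s(e_i-e_j))^T(e_i-e_j)-\nabla f(x+t(e_i-e_j))^T(e_i-e_j)|\le L_{i,j}|s-t|$; $L_{i,i}=0$; $L^{\max}=\max_{i,j}L_{i,j}$. For $x\in\mathcal F$, $D_h(x)=\min\{x_h-l_h,u_h-x_h\}$. A point $x^*\in\mathcal F$ is stationary iff there is $\lambda^*\in\mathbb{R}$ with $\nabla_i f(x^* )\ge\lambda^*$ if $x^*_i=l_i$, $=\lambda^*$ if $l_i<x^*_i<u_i$, $\le\lambda^*$ if $x^*_i=u_i$ (the limit of an AC2CD sequence is stationary under the standing assumptions). Active set $\mathcal A(x^* )=\{i:x^*_i=l_i\}\cup\{i:x^*_i=u_i\}$ and $\mathcal A^+(x^* )=\mathcal A(x^* )\cap\{i:\nabla_if(x^* )\ne\lambda^*\}$. Algorithm AC2CD with parameters $\tau\in(0,1]$, $\gamma,\delta\in(0,1)$,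 $0<A_l\le A_u<\infty$ and starting point $x^0\in\mathcal F$: for $k=0,1,2,\dots$: let $D^k=\max_h D_h(x^k)$; choose $j(k)$ with $D_{j(k)}(x^k)\ge\tau D^k$; choose a permutation $(p^k_1,\dots,p^k_n)$ of $\{1,\dots,n\}$; set $z^{k,1}=x^k$; for $i=1,\dots,n$ (inner iteration $(k,i)$): $g^{k,i}=\nabla_{j(k)}f(z^{k,i})-\nabla_{p^k_i}f(z^{k,i})$, $d^{k,i}=g^{k,i}(e_{p^k_i}-e_{j(k)})$; $\bar\alpha^{k,i}=\min\{u_{p^k_i}-z^{k,i}_{p^k_i},z^{k,i}_{j(k)}-l_{j(k)}\}/g^{k,i}$ if $g^{k,i}>0$, $=\min\{z^{k,i}_{p^k_i}-l_{p^k_i},u_{j(k)}-z^{k,i}_{j(k)}\}/|g^{k,i}|$ if $g^{k,i}<0$, $=0$ if $g^{k,i}=0$; choose $A^{k,i}\in[A_l,A_u]$, set $\Delta^{k,i}=\min\{\bar\alpha^{k,i},A^{k,i}\}$; starting from $\alpha=\Delta^{k,i}$, while $f(z^{k,i}+\alpha d^{k,i})>f(z^{k,i})+\gamma\alpha\nabla f(z^{k,i})^Td^{k,i}$ replace $\alpha$ by $\delta\alpha$; $\alpha^{k,i}$ is the final $\alpha$ and $z^{k,i+1}=z^{k,i}+\alpha^{k,i}d^{k,i}$. Then $x^{k+1}=z^{k,n+1}$. Standing assumptions: $\mathcal L_0=\{x\in\mathcal F: f(x)\le f(x^0)\}$ is nonempty and compact, and every $x\in\mathcal L_0$ has some index $i$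 with $l_i<x_i<u_i$. *)

From mathcomp Require Import all_boot all_order all_algebra all_fingroup.
From mathcomp Require Import all_classical all_reals all_analysis.
Set Implicit Arguments. Unset Strict Implicit. Unset Printing Implicit Defensive.
Import Order.TTheory GRing.Theory Num.Theory.
Import numFieldNormedType.Exports.
Local Open Scope ring_scope.
Local Open Scope classical_set_scope.

Section AC2CD.
Context {R : realType} {n : nat}.

Definition vec := 'I_n -> R.

Definition unitv (i : 'I_n) : vec := fun h => (h == i)%:R.

Definition enorm (x : vec) : R := Num.sqrt (\sum_(h < n) x h ^+ 2).

Definition vsub (x y : vec) : vec := fun h => x h - y h.

Definition vaxpy (x : vec) (a : R) (d : vec) : vec := fun h => x h + a * d h.

Definition dotv (x y : vec) : R := \sum_(h < n) x h * y h.

(* compactness in R^n (product topology = Euclidean topology) *)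
Definition compactRn (A : set vec) : Prop :=
  compact (A : set {ptws 'I_n -> (R : topologicalType)}).

Definition is_gradient (f : vec -> R) (g : vec -> vec) : Prop :=
  forall (x : vec) (i : 'I_n),
    is_derive (0 : R) (1 : R) (fun t : R => f (vaxpy x t (unitv i))) (g x i).

Definition lipschitz_grad (g : vec -> vec) (L : R) : Prop :=
  forall x y : vec, enorm (vsub (g x) (g y)) <= L * enorm (vsub x y).

Definition pair_lipschitz (g : vec -> vec) (Lij : 'I_n -> 'I_n -> R) : Prop :=
  (forall i j, i != j -> 0 < Lij i j) /\ (forall i, Lij i i = 0) /\
  forall (i j : 'I_n) (x : vec) (s t : R),
    let dij := fun h => unitv i h - unitv j h in
    `| dotv (g (vaxpy x s dij)) dij - dotv (g (vaxpy x t dij)) dij |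
      <= Lij i j * `|s - t|.

Definition Lmax (Lij : 'I_n -> 'I_n -> R) : R :=
  \big[Num.max/0]_(i < n) \big[Num.max/0]_(j < n) Lij i j.

Definition valid_bounds (l u : 'I_n -> \bar R) : Prop :=
  forall i, [/\ l i != +oo%E, u i != -oo%E & (l i < u i)%E].

Definition feasible (l u : 'I_n -> \bar R) (b : R) (x : vec) : Prop :=
  \sum_(h < n) x h = b /\ forall h, (l h <= (x h)%:E <= u h)%E.

Definition Dh (l u : 'I_n -> \bar R) (x : vec) (h : 'I_n) : \bar R :=
  Order.min ((x h)%:E - l h)%E (u h - (x h)%:E)%E.

Definition Dmax (l u : 'I_n -> \bar R) (x : vec) : \bar R :=
  \big[Order.max/-oo%E]_(h < n) Dh l u x h.

Definition level0 (f : vec -> R) (l u : 'I_n -> \bar R) (b : R) (x0 : vec) : set vec :=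
  [set y | feasible l u b y /\ f y <= f x0].

Definition gdir (g : vec -> vec) (z : vec) (j p : 'I_n) : R := g z j - g z p.
Definition ddir (g : vec -> vec) (z : vec) (j p : 'I_n) : vec :=
  fun h => gdir g z j p * (unitv p h - unitv j h).

(* the maximal feasible stepsize \bar alpha^{k,i} (possibly +oo) *)
Definition alpha_bar (l u : 'I_n -> \bar R) (g : vec -> vec) (z : vec) (j p : 'I_n)
  : \bar R :=
  let gg := gdir g z j p in
  if 0 < gg then
    (Order.min (u p - (z p)%:E) ((z j)%:E - l j) * (gg^-1)%:E)%E
  else if gg < 0 then
    (Order.min ((z p)%:E - l p) (u j - (z j)%:E) * (`|gg|^-1)%:E)%E
  else 0%E.

Definition armijo (f : vec -> R) (g : vec -> vec) (gamma : R) (z d : vec) (a : R)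
  : Prop := f (vaxpy z a d) <= f z + gamma * a * dotv (g z) d.

(* The sequences x (outer iterates), j (working indices), p (permutations),
   z (inner iterates, z k i for i = 0..n, paper's z^{k,i+1}),
   A (trial bounds A^{k,i}) and alpha (accepted stepsizes) are produced by
   AC2CD with parameters tau, gamma, delta, A_l, A_u.
   Inner iteration i : 'I_n here is the paper's inner iteration i+1. *)
Definition AC2CD_seq (f : vec -> R) (g : vec -> vec) (l u : 'I_n -> \bar R)
  (tau gamma delta Al Au : R)
  (x : nat -> vec) (j : nat -> 'I_n) (p : nat -> {perm 'I_n})
  (z : nat -> nat -> vec) (A : nat -> 'I_n -> R) (alpha : nat -> 'I_n -> R)
  : Prop :=
  (forall k, (tau%:E * Dmax l u (x k) <= Dh l u (x k) (j k))%E) /\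
  (forall k, z k 0%N = x k) /\
  (forall k (i : 'I_n),
     let zi := z k i in
     let q := p k i in
     let d := ddir g zi (j k) q in
     let Delta := fine (Order.min (alpha_bar l u g zi (j k) q) (A k i)%:E) in
     [/\ Al <= A k i <= Au,
        (exists m : nat,
           [/\ alpha k i = Delta * delta ^+ m,
               armijo f g gamma zi d (Delta * delta ^+ m) &
               forall m' : nat, (m' < m)%N -> ~ armijo f g gamma zi d (Delta * delta ^+ m')])
      & z k i.+1 = vaxpy zi (alpha k i) d]) /\
  (forall k, x k.+1 = z k n).

Definition stationary (g : vec -> vec) (l u : 'I_n -> \bar R) (b : R) (xs : vec) (lam : R)
  : Prop :=
  feasible l u b xs /\
  forall i,
    [/\ (xs i)%:E = l i -> lam <= g xs i,
        (l i < (xs i)%:E < u i)%E -> g xs i = lam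
      & (xs i)%:E = u i -> g xs i <= lam].

Definition active (l u : 'I_n -> \bar R) (xs : vec) (i : 'I_n) : bool :=
  ((xs i)%:E == l i) || ((xs i)%:E == u i).
Definition active_plus (g : vec -> vec) (l u : 'I_n -> \bar R) (xs : vec) (lam : R)
  (i : 'I_n) : bool :=
  active l u xs i && (g xs i != lam).

Definition first_such (P : nat -> Prop) (m : nat) : Prop :=
  P m /\ forall m', (m' < m)%N -> ~ P m'.

End AC2CD.

(* Let k > k_A, let h be in A^+ at the limit x*, and let i be the inner
   iteration of sweep k with p^k_i = h.  The working index j = j(k) is
   inactive at x*, so grad_j f = lambda* there, while grad_h f - lambda* has
   modulus at least zeta and a sign fixed by the bound active at h.  At
   z = z^{k,i}, within distance r of x*, the coefficient g^{k,i} has the same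
   sign and modulus at least zeta - 2 L r, so the step moves z_h towards that
   bound.  The radius in the definition of k_A makes the distance of z_h to
   its bound, divided by |g^{k,i}|, at most A_l <= A^{k,i}, and makes
   L_{j,h} Delta <= 2 (1 - gamma) for the trial step Delta; by the descent
   lemma along e_h - e_j the Armijo test accepts Delta itself.  As z_j stays
   strictly inside its bounds (k >= k_z), Delta is the ratio coming from the
   h side of alpha_bar, so z^{k,i+1}_h = x*_h.  The later inner iterations of
   the sweep do not touch coordinate h, hence x^{k+1}_h = x*_h. *)

From mathcomp Require Import all_boot all_order all_algebra all_fingroup.
From mathcomp Require Import all_classical all_reals all_analysis.
From mathcomp Require Import ring lra.
Import Order.TTheory GRing.Theory Num.Theory.
Import numFieldNormedType.Exports.
Local Open Scope ring_scope.
Local Open Scope classical_set_scope.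

Section RealFunctions.
Context {R : realType}.

Lemma is_derive_quadratic_bound (F : R -> R) (t d C : R) :
  (forall h, `|F (h + t) - F t - h * d| <= C * h ^+ 2) -> is_derive t 1 F d.
Proof.
move=> FC.
have quot : (fun h : R => h^-1 *: ((F \o shift t) (h *: 1) - F t)) @ 0^' --> d.
  apply/cvgrPdist_le => e e0.
  have C1 : 0 < `|C| + 1 by rewrite ltr_pwDr.
  near=> h.
  have h0 : h != 0 by near: h; exact: nbhs_dnbhs_neq.
  have -> : d - h^-1 *: ((F \o shift t) (h *: 1) - F t) = - (h^-1 * (F (h + t) - F t - h * d)).
    rewrite /= /shift -[h *: 1]/(h * 1) -[h^-1 *: _]/(h^-1 * _) mulr1.
    by rewrite [in RHS]mulrBr (mulrA h^-1) mulVf // mul1r; ring.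
  rewrite normrN normrM normfV.
  have hC : `|h| * (`|C| + 1) <= e.
    by rewrite -ler_pdivlMr //; near: h; apply: dnbhs0_le; rewrite divr_gt0.
  have FCh : `|F (h + t) - F t - h * d| <= `|h| * (`|h| * (`|C| + 1)).
    apply: le_trans (FC h) _.
    rewrite mulrA -expr2 real_normK ?num_real // mulrC.
    by apply: ler_wpM2l; rewrite ?sqr_ge0 // (le_trans (ler_norm C)) // lerDl.
  apply: le_trans (ler_wpM2l _ FCh) _; first by rewrite invr_ge0.
  by rewrite mulKf ?normr_eq0.
split; first exact: cvgP quot.
exact: cvg_lim quot.
Unshelve. all: by end_near.
Qed.

Lemma nincr_quadratic_bound (G dG : R -> R) (C s : R) :
  (forall t h, `|G (h + t) - G t - h * dG t| <= C * h ^+ 2) ->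
  (forall t, 0 < t < s -> dG t <= 0) -> 0 <= s -> G s <= G 0.
Proof.
move=> GC dG0 s0.
have dGt (t : R) : is_derive t (1 : R) G (dG t) by exact: is_derive_quadratic_bound (GC t).
have dG_ex t : derivable G t 1 by exact: (@ex_derive _ _ _ _ _ _ _ (dGt t)).
apply: (@ler0_derive1_le_cc _ G 0 s).
- by move=> t _; exact: dG_ex.
- by move=> t; rewrite in_itv /= derive1E derive_val => /dG0.
- by apply: derivable_within_continuous => t _; exact: dG_ex.
- by rewrite in_itv /= lexx s0.
- by rewrite in_itv /= lexx s0.
- exact: s0.
Qed.

End RealFunctions.

Section Vectors.
Context {R : realType} {n : nat}.
Implicit Types (w : @vec R n) (t s : R).

Lemma vaxpy0 w (e : vec) : vaxpy w 0 e = w.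
Proof. by apply/funext => h; rewrite /vaxpy mul0r addr0. Qed.

Lemma vaxpyA w t s (e : vec) : vaxpy (vaxpy w t e) s e = vaxpy w (s + t) e.
Proof. by apply/funext => h; rewrite /vaxpy; ring. Qed.

Lemma enorm_ge0 w : 0 <= enorm w.
Proof. exact: sqrtr_ge0. Qed.

Lemma coord_le_enorm w i : `|w i| <= enorm w.
Proof.
rewrite /enorm -(sqrtr_sqr (w i)); apply: ler_wsqrtr.
rewrite (bigD1 i) //= lerDl.
by apply: sumr_ge0 => k _; rewrite sqr_ge0.
Qed.

Lemma enorm_vsub_vaxpy_unitv w t i : enorm (vsub (vaxpy w t (unitv i)) w) = `|t|.
Proof.
rewrite /enorm (bigD1 i) //= big1 => [|k ki]; last first.
  by rewrite /vsub /vaxpy /unitv (negbTE ki) mulr0 addr0 subrr expr0n.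
by rewrite /vsub /vaxpy /unitv eqxx mulr1 addrAC subrr add0r addr0 sqrtr_sqr.
Qed.

Definition ediff (a b : 'I_n) : @vec R n := fun h => unitv a h - unitv b h.

Lemma dotv_ediff (v : vec) a b : a != b -> dotv v (ediff a b) = v a - v b.
Proof.
move=> ab; rewrite /dotv /ediff (bigD1 a) //= (bigD1 b) 1?eq_sym //= big1.
  by rewrite /unitv eqxx (negbTE ab) eq_sym (negbTE ab) eqxx /=; ring.
by move=> k /andP[ka kb]; rewrite /unitv (negbTE ka) (negbTE kb) subrr mulr0.
Qed.

Lemma lipschitz_grad_ge0 (g : @vec R n -> @vec R n) L :
  (0 < n)%N -> lipschitz_grad g L -> 0 <= L.
Proof.
move=> n0 g_lip; set w : @vec R n := fun => 0; set i := Ordinal n0.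
have := g_lip (vaxpy w 1 (unitv i)) w.
by rewrite enorm_vsub_vaxpy_unitv normr1 mulr1; apply: le_trans; exact: enorm_ge0.
Qed.

End Vectors.

Section GradientCalculus.
Context {R : realType} {n : nat}.
Variables (f : @vec R n -> R) (g : @vec R n -> @vec R n) (L : R).
Hypotheses (f_grad : is_gradient f g) (g_lip : lipschitz_grad g L) (L_ge0 : 0 <= L).

Lemma grad_coord_lip y y' i : `|g y i - g y' i| <= L * enorm (vsub y y').
Proof. exact: le_trans (coord_le_enorm (vsub (g y) (g y')) i) (g_lip y y'). Qed.

Lemma gdir_lip z y jj h : `|gdir g z jj h - gdir g y jj h| <= 2 * L * enorm (vsub z y).
Proof.
have -> : gdir g z jj h - gdir g y jj h = (g z jj - g y jj) - (g z h - g y h).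
  by rewrite /gdir; ring.
have -> : 2 * L * enorm (vsub z y) = L * enorm (vsub z y) + L * enorm (vsub z y) by ring.
by apply: le_trans (ler_normB _ _) (lerD _ _); apply: grad_coord_lip.
Qed.

Lemma is_derive_coord w i t :
  is_derive t (1 : R) (fun s => f (vaxpy w s (unitv i))) (g (vaxpy w t (unitv i)) i).
Proof.
have [dF DF] := f_grad (vaxpy w t (unitv i)) i.
have shiftE : (fun h : R => h^-1 *: (((fun s => f (vaxpy w s (unitv i))) \o shift t) (h *: 1)
                                     - f (vaxpy w t (unitv i)))) =
              (fun h : R => h^-1 *: (((fun s => f (vaxpy (vaxpy w t (unitv i)) s (unitv i)))
                                       \o shift 0) (h *: 1) - f (vaxpy (vaxpy w t (unitv i)) 0 (unitv i)))).
  by apply/funext => h; rewrite /= /shift !vaxpyA add0r addr0.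
by split; rewrite /derivable /derive shiftE.
Qed.

Lemma coord_mvt w i h :
  exists2 c, `|c| <= `|h| & f (vaxpy w h (unitv i)) - f w = g (vaxpy w c (unitv i)) i * h.
Proof.
have mvt a b : a <= b -> exists2 c, a <= c <= b &
    f (vaxpy w b (unitv i)) - f (vaxpy w a (unitv i)) = g (vaxpy w c (unitv i)) i * (b - a).
  move=> ab; have [c cab E] := MVT_segment ab (fun t _ => is_derive_coord w i t)
    (derivable_within_continuous (fun t _ => @ex_derive _ _ _ _ _ _ _ (is_derive_coord w i t))).
  by exists c => //; move: cab; rewrite in_itv.
case: (leP 0 h) => h0.
  have [c /andP[c0 ch]] := mvt _ _ h0; rewrite vaxpy0 subr0 => E; exists c; last exact: E.
  by rewrite !ger0_norm.
have [c /andP[hc c0] E] := mvt _ _ (ltW h0); exists c.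
  by rewrite !ler0_norm ?lerN2 // ltW.
by move: E; rewrite vaxpy0 sub0r mulrN -opprB => /oppr_inj.
Qed.

Lemma coord_taylor w i h : `|f (vaxpy w h (unitv i)) - f w - h * g w i| <= L * h ^+ 2.
Proof.
have [c ch ->] := coord_mvt w i h.
rewrite mulrC -mulrBr normrM -real_normK ?num_real // expr2 mulrCA.
apply: ler_wpM2l; first exact: normr_ge0.
apply: le_trans (grad_coord_lip _ _ i) _.
by rewrite enorm_vsub_vaxpy_unitv ler_wpM2l.
Qed.

Lemma pair_taylor y a b h : a != b ->
  `|f (vaxpy y h (ediff a b)) - f y - h * (g y a - g y b)| <= 3 * L * h ^+ 2.
Proof.
move=> ab; set w := vaxpy y (- h) (unitv b).
have -> : vaxpy y h (ediff a b) = vaxpy w h (unitv a).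
  by apply/funext => k; rewrite /w /vaxpy /ediff; ring.
have Ta := coord_taylor w a h.
have Tb := coord_taylor y b (- h); rewrite sqrrN in Tb.
have Ga : `|h * (g w a - g y a)| <= L * h ^+ 2.
  rewrite normrM -real_normK ?num_real // expr2 mulrCA ler_wpM2l //.
  by apply: le_trans (grad_coord_lip _ _ a) _; rewrite enorm_vsub_vaxpy_unitv normrN.
rewrite -/w in Tb.
set Fa := f (vaxpy w h (unitv a)) - f w - h * g w a in Ta.
set Fb := f w - f y - - h * g y b in Tb.
have -> : f (vaxpy w h (unitv a)) - f y - h * (g y a - g y b) =
          Fa + Fb + h * (g w a - g y a) by rewrite /Fa /Fb; ring.
have -> : 3 * L * h ^+ 2 = L * h ^+ 2 + L * h ^+ 2 + L * h ^+ 2 by ring.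
apply: le_trans (ler_normD _ _) (lerD _ Ga).
exact: le_trans (ler_normD _ _) (lerD Ta Tb).
Qed.

(* [is_gradient] only provides partial derivatives; [pair_taylor] is what makes
   [f] differentiable along [e_a - e_b]. *)
Lemma pair_descent y a b K s : a != b -> 0 <= s ->
  (forall t, 0 <= t -> (g (vaxpy y t (ediff a b)) a - g (vaxpy y t (ediff a b)) b)
                       - (g y a - g y b) <= K * t) ->
  f (vaxpy y s (ediff a b)) <= f y + s * (g y a - g y b) + K / 2 * s ^+ 2.
Proof.
move=> ab s0 slope.
set d := ediff a b; set psi := fun t => g (vaxpy y t d) a - g (vaxpy y t d) b.
pose G t := f (vaxpy y t d) - t * psi 0 - K / 2 * t ^+ 2.
pose dG t := psi t - psi 0 - K * t.
have GC t h : `|G (h + t) - G t - h * dG t| <= (3 * L + `|K| / 2) * h ^+ 2.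
  have -> : G (h + t) - G t - h * dG t =
    (f (vaxpy (vaxpy y t d) h d) - f (vaxpy y t d) - h * psi t) - K / 2 * h ^+ 2.
    by rewrite vaxpyA /G /dG; field.
  apply: le_trans (ler_normB _ _) _.
  rewrite mulrDl; apply: lerD; first exact: pair_taylor.
  by rewrite !normrM normfV normr_nat -expr2 real_normK ?num_real.
have := @nincr_quadratic_bound _ G dG _ s GC _ s0.
rewrite /G vaxpy0 !mul0r expr0n /= mulr0 !subr0 -/d.
have psi0 : psi 0 = g y a - g y b by rewrite /psi vaxpy0.
rewrite psi0 => G_nincr.
suff : f (vaxpy y s d) - s * (g y a - g y b) - K / 2 * s ^+ 2 <= f y by lra.
apply: G_nincr => t /andP[t0 _].
by rewrite /dG subr_le0 psi0 slope // ltW.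
Qed.

End GradientCalculus.

Section ExtendedGaps.
Context {R : realType}.
Local Open Scope ereal_scope.

Lemma fine_min_step_le (M : \bar R) (c Ak : R) : 0 <= M -> (0 < c)%R -> (0 < Ak)%R ->
  let D := fine (Order.min (M * (c^-1)%:E) Ak%:E) in (0 <= D)%R /\ (D * c)%:E <= M.
Proof.
move=> M0 c0 Ak0 /=; have ci : (0 < c^-1)%R by rewrite invr_gt0.
case: M M0 => [m||//]; last first.
  by move=> _; rewrite gt0_mulye ?lte_fin // minye /= leey (ltW Ak0).
rewrite lee_fin => m0; rewrite -EFinM -EFin_min /= lee_fin; split.
  by rewrite le_min (ltW Ak0) mulr_ge0 // ltW.
by rewrite -ler_pdivlMr // ge_min lexx.
Qed.

Lemma fine_min_step_eq (X : R) (Y : \bar R) (c Ak : R) :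
  (0 < c)%R -> (X <= Ak * c)%R ->
  let D := fine (Order.min (Order.min X%:E Y * (c^-1)%:E) Ak%:E) in
  (D * c)%:E < Y -> (D * c = X)%R.
Proof.
move=> c0 XA /=; have XA' : (X / c <= Ak)%R by rewrite ler_pdivrMr.
case: Y => [y||] //; last first.
  by rewrite miney -EFinM -EFin_min /= (min_idPl XA') divfK ?gt_eqF.
rewrite -EFin_min -EFinM -EFin_min /= lte_fin.
have mA : (Num.min X y / c <= Ak)%R.
  by apply: le_trans XA'; rewrite ler_pM2r ?invr_gt0 // ge_min lexx.
rewrite (min_idPl mA) divfK ?gt_eqF //.
by case: (leP X y) => // _; rewrite ltxx.
Qed.

Lemma lee_gap_lower (lb : \bar R) (x y : R) : y%:E <= x%:E - lb -> lb <= (x - y)%:E.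
Proof.
by case: lb => [r||] //=; rewrite ?lee_fin ?leNye // lerBrDr -lerBrDl.
Qed.

Lemma lte_gap_lower (lb : \bar R) (x y : R) : lb < (x - y)%:E -> y%:E < x%:E - lb.
Proof.
by case: lb => [r||] //=; rewrite ?lte_fin ?ltey // ltrBrDl -ltrBrDr.
Qed.

End ExtendedGaps.

Section InnerStep.
Context {R : realType} {n : nat}.
Variables (f : @vec R n -> R) (g : @vec R n -> @vec R n) (l u : 'I_n -> \bar R).
Variables (gamma delta Al Au : R).

Definition in_box (z : @vec R n) : Prop := forall h, (l h <= (z h)%:E <= u h)%E.

Definition inner_step (z : vec) (jj q : 'I_n) (Ak alpha : R) (z' : vec) : Prop :=
  let d := ddir g z jj q in
  let Delta := fine (Order.min (alpha_bar l u g z jj q) Ak%:E) in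
  [/\ Al <= Ak <= Au,
      exists m : nat,
        [/\ alpha = Delta * delta ^+ m, armijo f g gamma z d (Delta * delta ^+ m)
          & forall m' : nat, (m' < m)%N -> ~ armijo f g gamma z d (Delta * delta ^+ m')]
    & z' = vaxpy z alpha d].

Lemma inner_step_other z jj q Ak alpha z' h : h != jj -> h != q ->
  inner_step z jj q Ak alpha z' -> z' h = z h.
Proof.
move=> hj hq [_ _ ->].
by rewrite /vaxpy /ddir /unitv (negbTE hj) (negbTE hq) subrr !mulr0 addr0.
Qed.

Lemma ddir_neg z jj q : ddir g z jj q = (fun k => - gdir g z jj q * ediff jj q k).
Proof. by apply/funext => k; rewrite /ddir /ediff; ring. Qed.

Lemma alpha_bar_pos z jj q : 0 < gdir g z jj q ->
  alpha_bar l u g z jj q =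
    (Order.min (u q - (z q)%:E) ((z jj)%:E - l jj) * ((gdir g z jj q)^-1)%:E)%E.
Proof. by rewrite /alpha_bar /= => ->. Qed.

Lemma alpha_bar_neg z jj q : gdir g z jj q < 0 ->
  alpha_bar l u g z jj q =
    (Order.min ((z q)%:E - l q) (u jj - (z jj)%:E) * ((- gdir g z jj q)^-1)%:E)%E.
Proof. by move=> gd0; rewrite /alpha_bar /= gd0 ltr0_norm // ltNge ltW. Qed.

Lemma gdir_neq0 z jj q : gdir g z jj q != 0 -> q != jj.
Proof. by apply: contraNneq => ->; rewrite /gdir subrr. Qed.

Lemma shift_in_box z a b s : in_box z -> a != b -> 0 <= s ->
  (s%:E <= u a - (z a)%:E)%E -> (s%:E <= (z b)%:E - l b)%E ->
  in_box (vaxpy z s (ediff a b)).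
Proof.
move=> zB ab s0 sa sb h; rewrite /vaxpy /ediff /unitv.
have [->|ha] := eqVneq h a.
  rewrite (negbTE ab) subr0 mulr1; have /andP[la _] := zB a.
  rewrite (le_trans la) ?lee_fin ?lerDl //=.
  by rewrite leeBrDl // -EFinD in sa.
have [->|hb] := eqVneq h b.
  rewrite sub0r mulrN1 (lee_gap_lower _ _ _ sb) /=; have /andP[_ ub] := zB b.
  by rewrite (le_trans _ ub) // lee_fin gerBl.
by rewrite subrr mulr0 addr0; exact: zB.
Qed.

Lemma oriented_step_in_box z a b (c Ak s : R) :
  in_box z -> a != b -> 0 < c -> 0 < Ak -> 0 <= s <= 1 ->
  in_box (vaxpy z
    (fine (Order.min (Order.min (u a - (z a)%:E) ((z b)%:E - l b) * (c^-1)%:E)%E Ak%:E) * s)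
    (fun k => c * ediff a b k)).
Proof.
move=> zB ab c0 Ak0 /andP[s0 s1]; set D := fine _.
have M0 : (0 <= Order.min (u a - (z a)%:E) ((z b)%:E - l b))%E.
  have /andP[_ ua] := zB a; have /andP[lb _] := zB b.
  by rewrite le_min !sube_ge0 ?ua ?lb ?orbT.
have [D0 Dc] := fine_min_step_le _ _ _ M0 c0 Ak0.
have -> : vaxpy z (D * s) (fun k => c * ediff a b k) = vaxpy z (D * s * c) (ediff a b).
  by apply/funext => k; rewrite /vaxpy; ring.
have sD : ((D * s * c)%:E <= (D * c)%:E)%E.
  by rewrite lee_fin mulrAC ler_piMr // mulr_ge0 // ltW.
apply: shift_in_box => //; first by rewrite !mulr_ge0 // ltW.
  by apply: le_trans sD (le_trans Dc _); rewrite ge_min lexx.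
by apply: le_trans sD (le_trans Dc _); rewrite ge_min lexx orbT.
Qed.

Lemma inner_step_in_box z jj q Ak alpha z' : 0 < Al -> 0 < delta <= 1 ->
  in_box z -> inner_step z jj q Ak alpha z' -> in_box z'.
Proof.
move=> Al0 /andP[d0 d1] zB [/andP[AlA _] [m [-> _ _]] ->].
have Ak0 : 0 < Ak := lt_le_trans Al0 AlA.
have dm : 0 <= delta ^+ m <= 1 by rewrite exprn_ge0 ?exprn_ile1 // ltW.
case: (ltgtP (gdir g z jj q) 0) => [gd_lt0|gd_gt0|gd0].
- rewrite ddir_neg alpha_bar_neg // (minC ((z q)%:E - l q)%E).
  apply: oriented_step_in_box => //; last by rewrite oppr_gt0.
  by rewrite eq_sym; apply: (gdir_neq0 z); rewrite (lt_eqF gd_lt0).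
- rewrite alpha_bar_pos //; apply: oriented_step_in_box => //.
  by apply: (gdir_neq0 z); rewrite (gt_eqF gd_gt0).
- suff -> : ddir g z jj q = (fun => 0) by rewrite /vaxpy => h; rewrite mulr0 addr0; exact: zB.
  by apply/funext => k; rewrite /ddir gd0 mul0r.
Qed.

End InnerStep.

Lemma margin_bounds {R : realFieldType} {L K Al gamma zeta r : R} :
  0 <= L -> 0 < Al -> gamma < 1 -> 0 <= r ->
  r < zeta / (2 * L + Num.max Al^-1 (K / (2 * (1 - gamma)))) ->
  let kappa := zeta - 2 * L * r in
  [/\ 0 < kappa, r <= Al * kappa & K * r <= 2 * (1 - gamma) * kappa].
Proof.
move=> L0 Al0 g1 r0; set M := Num.max _ _ => r_small kappa.
have M1 : Al^-1 <= M by rewrite le_max lexx.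
have M0 : 0 < M by apply: lt_le_trans M1; rewrite invr_gt0.
have M2 : K / (2 * (1 - gamma)) <= M by rewrite le_max lexx orbT.
have g2 : 0 < 2 * (1 - gamma) by rewrite mulr_gt0 // subr_gt0.
have rM : r * (2 * L + M) < zeta.
  by rewrite -ltr_pdivlMr // ltr_wpDl // mulr_ge0.
have rMk : r * M < kappa by rewrite /kappa; lra.
split.
- by apply: le_lt_trans rMk; rewrite mulr_ge0 // ltW.
- rewrite -ler_pdivrMl // mulrC; apply: ltW; apply: le_lt_trans rMk.
  by rewrite ler_wpM2l.
- have -> : K = K / (2 * (1 - gamma)) * (2 * (1 - gamma)) by rewrite divfK ?gt_eqF.
  rewrite mulrAC mulrC ler_wpM2l ?ltW //; apply: le_lt_trans rMk.
  by rewrite mulrC; apply: ler_wpM2l.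
Qed.

Lemma stationary_inactive {R : realType} {n : nat} (g : @vec R n -> @vec R n)
  (l u : 'I_n -> \bar R) b xs lam i :
  stationary g l u b xs lam -> ~~ active l u xs i -> g xs i = lam.
Proof.
move=> [[_ xsF] st]; rewrite /active negb_or => /andP[nl nu].
have [_ st_in _] := st i; apply: st_in.
by have /andP[xl xu] := xsF i; rewrite !lt_neqAle xl xu eq_sym nl nu.
Qed.

Section Identification.
Context {R : realType} {n : nat}.
Context {f : @vec R n -> R} {g : @vec R n -> @vec R n} {L : R} {Lij : 'I_n -> 'I_n -> R}.
Context {b : R} {l u : 'I_n -> \bar R} {gamma delta Al Au : R}.
Context {xs : @vec R n} {lam zeta : R}.
Hypotheses (f_grad : is_gradient f g) (g_lip : lipschitz_grad g L) (L_ge0 : 0 <= L).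
Hypothesis g_pair_lip : pair_lipschitz g Lij.
Hypotheses (gamma_lt1 : gamma < 1) (Al_gt0 : 0 < Al).
Hypothesis xs_stat : stationary g l u b xs lam.

Lemma Lij_le_Lmax i j : Lij i j <= Lmax Lij.
Proof.
apply: le_trans (le_bigmax _ (fun j' => Lij i j') j) _.
exact: (le_bigmax _ (fun i' => \big[Num.max/0]_(j' < n) Lij i' j') i).
Qed.

Lemma armijo_pair z a1 a2 c D : a1 != a2 -> 0 < c -> 0 <= D ->
  Lij a1 a2 * D <= 2 * (1 - gamma) -> g z a1 - g z a2 = - c ->
  armijo f g gamma z (fun k => c * ediff a1 a2 k) D.
Proof.
move=> ab c0 D0 LD gab; have [Lij_gt0 [_ Lij_lip]] := g_pair_lip.
have slope t : 0 <= t -> (g (vaxpy z t (ediff a1 a2)) a1 - g (vaxpy z t (ediff a1 a2)) a2)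
                         - (g z a1 - g z a2) <= Lij a1 a2 * t.
  move=> t0; have := Lij_lip a1 a2 z t 0.
  rewrite /= vaxpy0 subr0 (ger0_norm t0) -/(ediff a1 a2) !dotv_ediff //.
  exact: le_trans (ler_norm _).
rewrite /armijo.
have -> : vaxpy z D (fun k => c * ediff a1 a2 k) = vaxpy z (D * c) (ediff a1 a2).
  by apply/funext => k; rewrite /vaxpy; ring.
apply: le_trans (pair_descent _ _ _ f_grad g_lip L_ge0 _ _ _ _ _ ab _ slope) _.
  by rewrite mulr_ge0 // ltW.
rewrite gab /dotv.
have -> : \sum_(h < n) g z h * (c * ediff a1 a2 h) = c * dotv (g z) (ediff a1 a2).
  by rewrite /dotv mulr_sumr; apply: eq_bigr => h _; ring.
rewrite dotv_ediff // gab.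
have cc : 0 <= D * c ^+ 2 by rewrite mulr_ge0 // sqr_ge0.
have := ler_wpM2l cc LD; nra.
Qed.

Lemma full_step_length {z jj q Ak alpha z' a1 a2 c X Y} :
  inner_step f g l u gamma delta Al Au z jj q Ak alpha z' ->
  ddir g z jj q = (fun k => c * ediff a1 a2 k) ->
  alpha_bar l u g z jj q = (Order.min X%:E Y * (c^-1)%:E)%E ->
  a1 != a2 -> 0 < c -> g z a1 - g z a2 = - c -> (0 <= Y)%E -> 0 <= X ->
  X <= Al * c -> Lmax Lij * X <= 2 * (1 - gamma) * c ->
  ((alpha * c)%:E < Y)%E -> alpha * c = X.
Proof.
move=> [/andP[AlA _] [m [am arm arm_first]] _] dE abE ab c0 gab Y0 X0 XAl XK acY.
rewrite dE abE in am arm arm_first.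
have Ak0 : 0 < Ak := lt_le_trans Al_gt0 AlA.
have M0 : (0 <= Order.min X%:E Y)%E by rewrite le_min lee_fin X0.
have [D0 DcX] := fine_min_step_le _ _ _ M0 c0 Ak0.
set D := fine _ in am arm arm_first D0 DcX.
have DcX' : D * c <= X by move: DcX; rewrite le_min lee_fin => /andP[].
have LD : Lij a1 a2 * D <= 2 * (1 - gamma).
  have [Lij_gt0 _] := g_pair_lip.
  have Lmax0 : 0 <= Lmax Lij := le_trans (ltW (Lij_gt0 _ _ ab)) (Lij_le_Lmax a1 a2).
  rewrite -(ler_pM2r c0) -mulrA.
  apply: le_trans (ler_wpM2r (mulr_ge0 D0 (ltW c0)) (Lij_le_Lmax a1 a2)) _.
  exact: le_trans (ler_wpM2l Lmax0 DcX') XK.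
case: m am arm arm_first => [|m] am _ arm_first; last first.
  by case: (arm_first 0%N isT); rewrite expr0 mulr1; apply: armijo_pair.
rewrite am expr0 mulr1 in acY *.
apply: (fine_min_step_eq _ _ _ _ c0 _ acY).
exact: le_trans XAl (ler_wpM2r (ltW c0) AlA).
Qed.

Lemma step_lands_on_lower {z jj h Ak alpha z' xh} :
  inner_step f g l u gamma delta Al Au z jj h Ak alpha z' -> jj != h -> in_box l u z ->
  xh%:E = l h -> gdir g z jj h < 0 ->
  z h - xh <= Al * - gdir g z jj h ->
  Lmax Lij * (z h - xh) <= 2 * (1 - gamma) * - gdir g z jj h ->
  ((z' jj)%:E < u jj)%E -> z' h = xh.
Proof.
move=> step jh zB xh_low gd_lt0 XAl XK z'u; have [_ _ z'E] := step.
have abE : alpha_bar l u g z jj h =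
    (Order.min (z h - xh)%:E (u jj - (z jj)%:E) * ((- gdir g z jj h)^-1)%:E)%E.
  by rewrite alpha_bar_neg // -xh_low -EFinB.
have acX : alpha * - gdir g z jj h = z h - xh.
  apply: (full_step_length step (ddir_neg _ _ _ _) abE jh _ _ _ _ XAl XK).
  - by rewrite oppr_gt0.
  - by rewrite opprK.
  - by have /andP[_ zju] := zB jj; rewrite sube_ge0 ?zju ?orbT.
  - by have /andP[zhl _] := zB h; rewrite subr_ge0 -lee_fin xh_low.
  - move: z'u; rewrite z'E /vaxpy ddir_neg /ediff /unitv eqxx (negbTE jh) subr0 mulr1.
    by rewrite lteBrDl // -EFinD.
rewrite z'E /vaxpy ddir_neg /ediff /unitv eqxx eq_sym (negbTE jh) sub0r mulrN1.
by rewrite mulrN acX; ring.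
Qed.

Lemma step_lands_on_upper {z jj h Ak alpha z' xh} :
  inner_step f g l u gamma delta Al Au z jj h Ak alpha z' -> jj != h -> in_box l u z ->
  xh%:E = u h -> 0 < gdir g z jj h ->
  xh - z h <= Al * gdir g z jj h ->
  Lmax Lij * (xh - z h) <= 2 * (1 - gamma) * gdir g z jj h ->
  (l jj < (z' jj)%:E)%E -> z' h = xh.
Proof.
move=> step jh zB xh_up gd_gt0 XAl XK z'l; have [_ _ z'E] := step.
have dE : ddir g z jj h = (fun k => gdir g z jj h * ediff h jj k) by [].
have abE : alpha_bar l u g z jj h =
    (Order.min (xh - z h)%:E ((z jj)%:E - l jj) * ((gdir g z jj h)^-1)%:E)%E.
  by rewrite alpha_bar_pos // -xh_up -EFinB.
have acX : alpha * gdir g z jj h = xh - z h.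
  apply: (full_step_length step dE abE _ gd_gt0 _ _ _ XAl XK).
  - by rewrite eq_sym.
  - by rewrite /gdir opprB.
  - by have /andP[zjl _] := zB jj; rewrite sube_ge0 ?zjl ?orbT.
  - by have /andP[_ zhu] := zB h; rewrite subr_ge0 -lee_fin xh_up.
  - move: z'l; rewrite z'E /vaxpy /ddir /unitv eqxx (negbTE jh) sub0r mulrN1.
    by rewrite mulrN; apply: lte_gap_lower.
rewrite z'E /vaxpy /ddir /unitv eqxx eq_sym (negbTE jh) subr0 mulr1.
by rewrite acX; ring.
Qed.

Lemma inner_step_fixes_active {z jj h Ak alpha z'} :
  in_box l u z -> inner_step f g l u gamma delta Al Au z jj h Ak alpha z' ->
  g xs jj = lam -> active_plus g l u xs lam h -> zeta <= `|g xs h - lam| ->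
  enorm (vsub z xs) < zeta / (2 * L + Num.max Al^-1 (Lmax Lij / (2 * (1 - gamma)))) ->
  (l jj < (z' jj)%:E < u jj)%E -> z' h = xs h.
Proof.
move=> zB step gj /andP[h_act g_ne] zeta_le r_small /andP[z'l z'u].
have jh : jj != h by apply: contra_neq g_ne => <-.
set r := enorm (vsub z xs) in r_small.
have [kappa0 rAl rK] := margin_bounds L_ge0 Al_gt0 gamma_lt1 (enorm_ge0 _) r_small.
set kappa := zeta - 2 * L * r in kappa0 rAl rK.
have gd_near : `|gdir g z jj h - (lam - g xs h)| <= 2 * L * r.
  by rewrite -gj; exact: gdir_lip.
have zh_near : `|z h - xs h| <= r := coord_le_enorm (vsub z xs) h.
have xh_near : `|xs h - z h| <= r by rewrite distrC.
have gap_bounds X c : X <= r -> kappa <= c ->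
    X <= Al * c /\ Lmax Lij * X <= 2 * (1 - gamma) * c.
  move=> Xr kc; have Lmax0 : 0 <= Lmax Lij.
    exact: le_trans (ltW (g_pair_lip.1 _ _ jh)) (Lij_le_Lmax jj h).
  split; first exact: le_trans Xr (le_trans rAl (ler_wpM2l (ltW Al_gt0) kc)).
  apply: le_trans (ler_wpM2l Lmax0 Xr) (le_trans rK (ler_wpM2l _ kc)).
  by rewrite mulr_ge0 // subr_ge0 ltW.
have [st_low _ st_up] := xs_stat.2 h.
case/orP: h_act => /eqP xs_bound.
- have gh : zeta <= g xs h - lam by rewrite -[g xs h - lam]ger0_norm // subr_ge0 st_low.
  have gd_neg : kappa <= - gdir g z jj h.
    by move: gd_near; rewrite ler_norml => /andP[_]; rewrite /kappa; lra.
  have [XAl XK] := gap_bounds _ _ (le_trans (ler_norm _) zh_near) gd_neg.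
  apply: (step_lands_on_lower step jh zB xs_bound _ XAl XK z'u).
  by rewrite -oppr_gt0 (lt_le_trans kappa0).
- have gh : zeta <= lam - g xs h by rewrite -opprB -ler0_norm // subr_le0 st_up.
  have gd_pos : kappa <= gdir g z jj h.
    by move: gd_near; rewrite ler_norml => /andP[+ _]; rewrite /kappa; lra.
  have [XAl XK] := gap_bounds _ _ (le_trans (ler_norm _) xh_near) gd_pos.
  exact: (step_lands_on_upper step jh zB xs_bound (lt_le_trans kappa0 gd_pos) XAl XK z'l).
Qed.

End Identification.

Section Iterates.
Context {R : realType} {n : nat}.
Context {f : @vec R n -> R} {g : @vec R n -> @vec R n} {l u : 'I_n -> \bar R}.

Context {tau gamma delta Al Au b : R}.
Context {x : nat -> @vec R n} {j : nat -> 'I_n} {p : nat -> {perm 'I_n}}.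
Context {z : nat -> nat -> @vec R n} {A : nat -> 'I_n -> R} {alpha : nat -> 'I_n -> R}.
Hypothesis run : AC2CD_seq f g l u tau gamma delta Al Au x j p z A alpha.

Lemma AC2CD_inner_step k (i : 'I_n) :
  inner_step f g l u gamma delta Al Au (z k i) (j k) (p k i) (A k i) (alpha k i) (z k i.+1).
Proof. by case: run => _ [_ [step _]]; exact: step. Qed.

Lemma AC2CD_in_box : feasible l u b (x 0%N) -> 0 < Al -> 0 < delta <= 1 ->
  forall k i, (i <= n)%N -> in_box l u (z k i).
Proof.
move=> [_ x0B] Al0 d01; have [_ [z0 [_ xE]]] := run.
have sweep k : in_box l u (x k) -> forall i, (i <= n)%N -> in_box l u (z k i).
  move=> xB; elim=> [_|i IH lt_in]; first by rewrite z0.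
  apply: inner_step_in_box Al0 d01 (IH (ltnW lt_in)) _.
  exact: AC2CD_inner_step k (Ordinal lt_in).
suff xB k : in_box l u (x k) by move=> k; exact: sweep.
by elim: k => [|k IH]; [exact: x0B | rewrite xE; exact: sweep].
Qed.

Lemma AC2CD_coord_after_visit {k h i0} : h != j k -> p k i0 = h ->
  x k.+1 h = z k i0.+1 h.
Proof.
move=> hj pi0; have [_ [_ [_ xE]]] := run; rewrite xE.
suff keep i : (i0 < i <= n)%N -> z k i h = z k i0.+1 h by apply: keep; rewrite ltn_ord /=.
elim: i => [//|i IH] /andP[lt_i0 le_in].
have [->//|ne_i0] := eqVneq i i0.
rewrite -IH; last by rewrite (ltnW le_in) andbT ltn_neqAle eq_sym ne_i0 -ltnS.
have hq : h != p k (Ordinal le_in).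
  by rewrite -pi0 (inj_eq perm_inj); apply: contra_neq ne_i0 => ->.
exact: inner_step_other hj hq (AC2CD_inner_step k (Ordinal le_in)).
Qed.

End Iterates.

Theorem theorem1 (R : realType) (n : nat)
  (f : @vec R n -> R) (g : @vec R n -> @vec R n) (L : R) (Lij : 'I_n -> 'I_n -> R)
  (b : R) (l u : 'I_n -> \bar R)
  (tau gamma delta Al Au : R)
  (x : nat -> @vec R n) (j : nat -> 'I_n) (p : nat -> {perm 'I_n})
  (z : nat -> nat -> @vec R n) (A : nat -> 'I_n -> R) (alpha : nat -> 'I_n -> R)
  (xs : @vec R n) (lam zeta : R) (kA kj kz : nat) :
  (* the problem *)
  (2 <= n)%N ->
  valid_bounds l u ->
  is_gradient f g ->
  lipschitz_grad g L ->
  pair_lipschitz g Lij ->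
  (* parameters of AC2CD *)
  0 < tau <= 1 -> 0 < gamma < 1 -> 0 < delta < 1 -> 0 < Al -> Al <= Au ->
  (* the sequence produced by AC2CD from x^0 in F *)
  feasible l u b (x 0%N) ->
  AC2CD_seq f g l u tau gamma delta Al Au x j p z A alpha ->
  (* standing assumptions *)
  level0 f l u b (x 0%N) !=set0 ->
  compactRn (level0 f l u b (x 0%N)) ->
  (forall y, level0 f l u b (x 0%N) y ->
     exists i, (l i < (y i)%:E < u i)%E) ->
  (* x^k -> xs, a stationary point with multiplier lam, A^+(xs) nonempty *)
  (forall eps : R, 0 < eps ->
     exists K : nat, forall k, (K <= k)%N -> enorm (vsub (x k) xs) < eps) ->
  stationary g l u b xs lam ->
  (exists i, active_plus g l u xs lam i) ->
  (* zeta(xs) = min over A^+(xs) of |grad_i f(xs) - lam| *)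
  (exists i, active_plus g l u xs lam i /\ zeta = `|g xs i - lam|) ->
  (forall i, active_plus g l u xs lam i -> zeta <= `|g xs i - lam|) ->
  (* k_A, k_j, k_z *)
  first_such (fun m => forall k, (m <= k)%N -> forall i : 'I_n,
      enorm (vsub (z k i) xs) <
        zeta / (2 * L + Num.max (Al^-1) (Lmax Lij / (2 * (1 - gamma))))) kA ->
  first_such (fun m => forall k, (m <= k)%N -> ~~ active l u xs (j k)) kj ->
  first_such (fun m => forall k, (m <= k)%N -> forall i : nat, (i <= n)%N ->
      (l (j k) < (z k i (j k))%:E < u (j k))%E) kz ->
  (maxn kj kz <= kA)%N ->
  forall k, (kA < k)%N -> forall h, active_plus g l u xs lam h -> x k h = xs h.
Proof.
move=> n2 _ f_grad g_lip g_pair _ /andP[_ gamma_lt1] /andP[d0 d1] Al0 _ x0F run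
  _ _ _ _ xs_stat _ _ zeta_min [kA_near _] [kj_inact _] [kz_inside _] kA_max
  [//|k] /[!ltnS] kA_k h h_act.
move: kA_max; rewrite geq_max => /andP[kj_kA kz_kA].
have j_inact := kj_inact k (leq_trans kj_kA kA_k).
have hj : h != j k by apply: contraNneq j_inact => <-; case/andP: h_act.
have L0 : 0 <= L by apply: lipschitz_grad_ge0 (ltnW n2) g_lip.
have pi0 : p k ((p k)^-1 h)%g = h by rewrite permKV.
have step := AC2CD_inner_step run k ((p k)^-1 h)%g; rewrite pi0 in step.
rewrite (AC2CD_coord_after_visit run hj pi0).
apply: (inner_step_fixes_active f_grad g_lip L0 g_pair gamma_lt1 Al0 xs_stat _ step).
- have d01 : 0 < delta <= 1 by rewrite d0 ltW.
  exact: (AC2CD_in_box run x0F Al0 d01 k _ (ltnW (ltn_ord _))).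
- exact: stationary_inactive xs_stat j_inact.
- exact: h_act.
- exact: zeta_min.
- exact: kA_near k kA_k _.
- exact: kz_inside k (leq_trans kz_kA kA_k) _ (ltn_ord _).
Qed.
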